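(* For every set of formulas $\Gamma$ and every formula $\alpha$: if $\Gamma\vdash_{L_1^1}\alpha$ then $\Gamma\vDash_{\mathcal{M}_1^1}\alpha$.
   Context: Formulas are built from a countable set of propositional variables using unary $\neg,\circ$ and binary $\land,\lor,\to$; $\circ^0\alpha=\alpha$, $\circ^{m+1}\alpha=\circ(\circ^m\alpha)$. mbC is the Hilbert calculus with the axiom schemas of a standard axiomatization of positive classical propositional logic in $\land,\lor,\to$, plus (TND) $\alpha\lor\neg\alpha$ and (bc1) $\circ\alpha\to(\alpha\to(\neg\alpha\to\beta))$, with modus ponens as only rule; mbCciw is mbC plus (ciw) $\circ\alpha\lor(\alpha\land\neg\alpha)$; $L_1^0$ is mbCciw plus $\circ\circ\circ\alpha$; $L_1^1$ is $L_1^0$ plus (cf) $\neg\neg\alpha\to\alpha$ and (ce) $\alpha\to\neg\neg\alpha$. $\Gamma\vdash_L\alpha$ means derivability in $L$. Semantics: with Boolean operations $\land,\lor,\to,\sim$ on $\{0,1\}$, let $\mathbb{B}_1^0=\{x\in\{0,1\}^3: x_1\lor x_2=1,\ x_3\lor\sim(x_1\land x_2)=1\}$. The multialgebra $\mathcal{B}_1^1$ on $\mathbb{B}_1^0$ has $x\# y=\{z\in\mathbb{B}_1^0: z_1=x_1\# y_1\}$ for $\#\in\{\land,\lor,\to\}$, $\neg x=\{z\in\mathbb{B}_1^0: z_1=x_2 \text{ and } z_2=x_1\}$, $\circ x=\{(\sim(x_1\land x_2),x_3,x_3\land\sim(x_1\land x_2))\}$. $D_1^0=\{x:x_1=1\}$,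 $\mathcal{M}_1^1=(\mathcal{B}_1^1,D_1^0)$. Valuations over $\mathcal{M}_1^1$ are maps $h$ from formulas to $\mathbb{B}_1^0$ with $h(\alpha\#\beta)\in h(\alpha)\#h(\beta)$, $h(\neg\alpha)\in\neg h(\alpha)$, $h(\circ\alpha)\in\circ h(\alpha)$; $\Gamma\vDash_{\mathcal{M}_1^1}\alpha$ iff every valuation $h$ with $h[\Gamma]\subseteq D_1^0$ has $h(\alpha)\in D_1^0$. *)

From Stdlib Require Import Bool.

Inductive formula : Type :=
| Var  : nat -> formula
| Neg  : formula -> formula
| Circ : formula -> formula
| And  : formula -> formula -> formula
| Or   : formula -> formula -> formula
| Imp  : formula -> formula -> formula.

Fixpoint circ_iter (m : nat) (a : formula) : formula :=
  match m with
  | 0 => a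
  | S m' => Circ (circ_iter m' a)
  end.

(** Axiom schemas of L_1^1 = mbC + (ciw) + circ circ circ alpha + (cf) + (ce).
    Positive classical logic: the standard axiomatization used for mbC
    (Carnielli--Coniglio), Ax1--Ax9. *)
Inductive L11_axiom : formula -> Prop :=
| Ax1 a b : L11_axiom (Imp a (Imp b a))
| Ax2 a b c : L11_axiom (Imp (Imp a b) (Imp (Imp a (Imp b c)) (Imp a c)))
| Ax3 a b : L11_axiom (Imp a (Imp b (And a b)))
| Ax4 a b : L11_axiom (Imp (And a b) a)
| Ax5 a b : L11_axiom (Imp (And a b) b)
| Ax6 a b : L11_axiom (Imp a (Or a b))
| Ax7 a b : L11_axiom (Imp b (Or a b))
| Ax8 a b c : L11_axiom (Imp (Imp a c) (Imp (Imp b c) (Imp (Or a b) c)))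
| Ax9 a b : L11_axiom (Or a (Imp a b))
| AxTND a : L11_axiom (Or a (Neg a))
| Axbc1 a b : L11_axiom (Imp (Circ a) (Imp a (Imp (Neg a) b)))
| Axciw a : L11_axiom (Or (Circ a) (And a (Neg a)))
| AxCCC a : L11_axiom (circ_iter 3 a)
| Axcf a : L11_axiom (Imp (Neg (Neg a)) a)
| Axce a : L11_axiom (Imp a (Neg (Neg a))).

Inductive derivable_L11 (Gamma : formula -> Prop) : formula -> Prop :=
| d_prem a : Gamma a -> derivable_L11 Gamma a
| d_ax a : L11_axiom a -> derivable_L11 Gamma a
| d_mp a b : derivable_L11 Gamma a -> derivable_L11 Gamma (Imp a b) ->
             derivable_L11 Gamma b.

Definition snap := (bool * bool * bool)%type.
Definition s1 (x : snap) : bool := fst (fst x).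
Definition s2 (x : snap) : bool := snd (fst x).
Definition s3 (x : snap) : bool := snd x.

Definition in_B10 (x : snap) : Prop :=
  s1 x || s2 x = true /\ s3 x || negb (s1 x && s2 x) = true.

Definition designated (x : snap) : Prop := s1 x = true.

(** Multioperations of B_1^1 (as membership relations "z in op x y"). *)
Definition mand (x y z : snap) : Prop := in_B10 z /\ s1 z = s1 x && s1 y.
Definition mor  (x y z : snap) : Prop := in_B10 z /\ s1 z = s1 x || s1 y.
Definition mimp (x y z : snap) : Prop := in_B10 z /\ s1 z = implb (s1 x) (s1 y).
Definition mneg (x z : snap) : Prop := in_B10 z /\ s1 z = s2 x /\ s2 z = s1 x.
Definition mcirc (x z : snap) : Prop :=
  z = (negb (s1 x && s2 x), s3 x, s3 x && negb (s1 x && s2 x)).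

Definition valuation_M11 (h : formula -> snap) : Prop :=
  (forall a, in_B10 (h a)) /\
  (forall a b, mand (h a) (h b) (h (And a b))) /\
  (forall a b, mor  (h a) (h b) (h (Or a b))) /\
  (forall a b, mimp (h a) (h b) (h (Imp a b))) /\
  (forall a, mneg (h a) (h (Neg a))) /\
  (forall a, mcirc (h a) (h (Circ a))).

Definition sem_conseq_M11 (Gamma : formula -> Prop) (a : formula) : Prop :=
  forall h, valuation_M11 h ->
    (forall g, Gamma g -> designated (h g)) -> designated (h a).

(* Designation only looks at the first
   coordinate, on which every multioperation except [~] and [o] is the Boolean
   truth table, so modus ponens preserves it.  Once the first coordinates are
   computed, every axiom except (TND) and [ooo a] is a Boolean tautology in the
   first two coordinates of its subformulas; (TND) is the constraint
   [x1 || x2 = 1] of B_1^0, and [ooo a] holds because [oo x] always has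
   [x1 && x2 = 0], whatever [x]. *)
From Stdlib Require Import Bool.

Lemma mimp_designated (x y z : snap) :
  mimp x y z -> designated z -> designated x -> designated y.
Proof.
  unfold mimp, designated; intros [_ ->] Hxy Hx.
  now rewrite Hx in Hxy.
Qed.

Lemma mcirc_mcirc_consistent (x y z : snap) :
  mcirc x y -> mcirc y z -> s1 z && s2 z = false.
Proof.
  intros -> ->.
  now destruct x as [[[|] [|]] [|]].
Qed.

Lemma mcirc3_designated (x y z w : snap) :
  mcirc x y -> mcirc y z -> mcirc z w -> designated w.
Proof.
  intros Hxy Hyz ->; unfold designated, s1 at 1; simpl.
  now rewrite (mcirc_mcirc_consistent x y z Hxy Hyz).
Qed.

Section Valuation.

Variable h : formula -> snap.
Hypothesis Hh : valuation_M11 h.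

Lemma s1_or_s2 (a : formula) : s1 (h a) || s2 (h a) = true.
Proof. exact (proj1 (proj1 Hh a)). Qed.

Lemma s1_And (a b : formula) : s1 (h (And a b)) = s1 (h a) && s1 (h b).
Proof. exact (proj2 (proj1 (proj2 Hh) a b)). Qed.

Lemma s1_Or (a b : formula) : s1 (h (Or a b)) = s1 (h a) || s1 (h b).
Proof. exact (proj2 (proj1 (proj2 (proj2 Hh)) a b)). Qed.

Lemma s1_Imp (a b : formula) : s1 (h (Imp a b)) = implb (s1 (h a)) (s1 (h b)).
Proof. exact (proj2 (proj1 (proj2 (proj2 (proj2 Hh))) a b)). Qed.

Lemma s1_Neg (a : formula) : s1 (h (Neg a)) = s2 (h a).
Proof. exact (proj1 (proj2 (proj1 (proj2 (proj2 (proj2 (proj2 Hh)))) a))). Qed.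

Lemma s2_Neg (a : formula) : s2 (h (Neg a)) = s1 (h a).
Proof. exact (proj2 (proj2 (proj1 (proj2 (proj2 (proj2 (proj2 Hh)))) a))). Qed.

Lemma mcirc_Circ (a : formula) : mcirc (h a) (h (Circ a)).
Proof. exact (proj2 (proj2 (proj2 (proj2 (proj2 Hh)))) a). Qed.

Lemma s1_Circ (a : formula) : s1 (h (Circ a)) = negb (s1 (h a) && s2 (h a)).
Proof. now rewrite (mcirc_Circ a). Qed.

Lemma designated_Circ3 (a : formula) : designated (h (circ_iter 3 a)).
Proof.
  exact (mcirc3_designated _ _ _ _
           (mcirc_Circ a) (mcirc_Circ (Circ a)) (mcirc_Circ (Circ (Circ a)))).
Qed.

Lemma designated_axiom (a : formula) : L11_axiom a -> designated (h a).
Proof.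
  intros Ha; unfold designated.
  destruct Ha; try apply designated_Circ3;
    repeat first [ rewrite s1_Imp | rewrite s1_And | rewrite s1_Or
                 | rewrite s1_Neg | rewrite s2_Neg | rewrite s1_Circ ];
    try apply s1_or_s2;
    repeat match goal with
    | |- context [s1 (h ?x)] => destruct (s1 (h x))
    | |- context [s2 (h ?x)] => destruct (s2 (h x))
    end; reflexivity.
Qed.

Lemma designated_mp (a b : formula) :
  designated (h (Imp a b)) -> designated (h a) -> designated (h b).
Proof. exact (mimp_designated _ _ _ (proj1 (proj2 (proj2 (proj2 Hh))) a b)). Qed.

End Valuation.

Theorem theorem7 (Gamma : formula -> Prop) (alpha : formula) :
  derivable_L11 Gamma alpha -> sem_conseq_M11 Gamma alpha.
Proof.
  intros D h Hh HGamma.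
  induction D as [a Ha | a Ha | a b _ IHa _ IHab].
  - exact (HGamma a Ha).
  - exact (designated_axiom h Hh a Ha).
  - exact (designated_mp h Hh a b IHab IHa).
Qed.
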